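(* Let $v$ be a vertex of a finite 2-covered graph of spaces $X$ with incident oriented edges $e_i$, $i\in I$ (so $\tau(e_i)=v$), $|I|\ge1$, with edge maps $\tau_i\colon E_i\looparrowright V$. Suppose $v$ is unfoldable, $v$ is not reducible, and if $|I|=1$ then $V$ has at least one edge. Then exactly one of the following holds: (1) (degenerate) there is a distinguished index $0\in I$ such that $\tau_0\colon E_0\to V$ is not an embedding, and for $i\ne0$ the maps $\tau_i$ are embeddings with pairwise disjoint images; (2) (nondegenerate) $|I|=3$, all $\tau_i$ are embeddings, the images of any two incident edge spaces intersect, and there is a vertex of $V$ lying in the image of all three incident edge spaces.
   Context: A 2-covered graph of spaces $X$ consists of: a finite connected graph $\Gamma_U(X)$, with oriented edges $e$, reversal $\bar e$, and terminal/initial vertices $\tau(e),\iota(e)=\tau(\bar e)$; for each vertex $v$ a finite connected graph $V$; for each edge $e$ a finite connected graph $E=\bar E$ (possibly a point); and for each oriented edge $e$ a combinatorial immersion $\tau_e\colon E\looparrowright V$ where $v=\tau(e)$; such that for each vertex $v$, every edge of $V$ is the image of exactly two edges of $\bigsqcup_{\tau(e)=v}E$. For a vertex $v$ with incident oriented edges $e_i$, $i\in I$, and $J\subseteq I$, put $V_J=\bigcup_{j\in J}\tau_j(E_j)$. The vertex $v$ is unfoldable if for every $J\subseteq I$, either the map $\bigsqcup_{j\in J}E_j\to V_J$ is an isomorphism of graphs or the map $\bigsqcup_{i\in I\setminus J}E_i\to V_{I\setminus J}$ is an isomorphism of graphs. The vertex $v$ is reducible if it has exactly two incident oriented edges and both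 maps $E_i\to V$ are graph isomorphisms. *)

From mathcomp Require Import all_boot.
Set Implicit Arguments. Unset Strict Implicit. Unset Printing Implicit Defensive.

(* Serre-style finite graphs: vertices, oriented edges with a fixed-point-free
   reversal involution, and a terminal-vertex map; iota d := gtau (grev d). *)
Record graph := Graph {
  gV : finType;
  gD : finType;
  grev : gD -> gD;
  gtau : gD -> gV;
  grevK : involutive grev;
  grev_neq : forall d, grev d != d }.

Definition giota (G : graph) (d : gD G) : gV G := gtau (grev d).

Definition gconnected (G : graph) : Prop :=
  0 < #|gV G| /\
  forall x y : gV G,
    connect (fun a b : gV G => [exists d : gD G, (giota d == a) && (gtau d == b)]) x y.

Record gmap (G H : graph) := GMap {
  fv : gV G -> gV H;
  fd : gD G -> gD H;
  fd_rev : forall d, fd (grev d) = grev (fd d);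
  fd_tau : forall d, gtau (fd d) = fv (gtau d) }.

Definition immersion G H (f : gmap G H) : Prop :=
  forall d1 d2 : gD G, gtau d1 = gtau d2 -> fd f d1 = fd f d2 -> d1 = d2.

Definition embedding G H (f : gmap G H) : Prop := injective (fv f) /\ injective (fd f).

Definition giso G H (f : gmap G H) : Prop := bijective (fv f) /\ bijective (fd f).

Definition in_img G H (f : gmap G H) (w : gV H) : Prop := exists x, fv f x = w.

Unset Implicit Arguments.
Record two_covered := TwoCovered {
  Gam : graph;
  Gam_conn : gconnected Gam;
  VS : gV Gam -> graph;
  VS_conn : forall v, gconnected (VS v);
  ES : gD Gam -> graph;
  ES_conn : forall e, gconnected (ES e);
  ES_rev : forall e, ES (grev e) = ES e;
  tmap : forall (v : gV Gam) (e : {e : gD Gam | gtau e == v}), gmap (ES (val e)) (VS v);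
  tmap_imm : forall v e, immersion (tmap v e);
  (* every (oriented, equivalently unoriented) edge of V is the image of exactly
     two edges of the disjoint union of the incident edge spaces *)
  two_cover : forall (v : gV Gam) (d : gD (VS v)),
    #|[set p : {e : {e : gD Gam | gtau e == v} & gD (ES (val e))}
         | fd (tmap v (tag p)) (tagged p) == d]| = 2 }.
Set Implicit Arguments.
Arguments tmap {t} v e.
Arguments VS {t} _.
Arguments ES {t} _.

Section Local.
Variables (X : two_covered) (v : gV (Gam X)).

Definition inc : finType := {e : gD (Gam X) | gtau e == v}.
Definition Ei (i : inc) : graph := ES (val i).
Definition tau_ (i : inc) : gmap (Ei i) (VS v) := tmap v i.

(* the map  \bigsqcup_{j in J} E_j -> V_J  is an isomorphism of graphs, i.e.
   (since it is onto V_J by definition) injective on vertices and on edges *)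
Definition union_iso (J : {set inc}) : Prop :=
  (forall (i j : inc) (x : gV (Ei i)) (y : gV (Ei j)), i \in J -> j \in J ->
     fv (tau_ i) x = fv (tau_ j) y -> existT (fun k => gV (Ei k)) i x = existT _ j y) /\
  (forall (i j : inc) (x : gD (Ei i)) (y : gD (Ei j)), i \in J -> j \in J ->
     fd (tau_ i) x = fd (tau_ j) y -> existT (fun k => gD (Ei k)) i x = existT _ j y).

Definition unfoldable : Prop := forall J : {set inc}, union_iso J \/ union_iso (~: J).

Definition reducible : Prop := #|inc| = 2 /\ forall i : inc, giso (tau_ i).

Definition images_meet (i j : inc) : Prop :=
  exists w, in_img (tau_ i) w /\ in_img (tau_ j) w.

Definition degenerate : Prop :=
  exists i0 : inc, ~ embedding (tau_ i0) /\
    (forall i, i != i0 -> embedding (tau_ i)) /\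
    (forall i j, i != i0 -> j != i0 -> i != j -> ~ images_meet i j).

Definition nondegenerate : Prop :=
  #|inc| = 3 /\ (forall i, embedding (tau_ i)) /\
  (forall i j, i != j -> images_meet i j) /\
  exists w, forall i, in_img (tau_ i) w.

End Local.

From mathcomp Require Import all_boot.
From Stdlib Require Import Classical Eqdep_dec.
Set Implicit Arguments. Unset Strict Implicit. Unset Printing Implicit Defensive.

(* If some tau_i0 is not an embedding, unfoldability at J = {i0} makes the
   remaining maps embed with disjoint images.  Otherwise all tau_i embed, so
   every edge of V lies in the images of exactly two edge spaces, and by
   unfoldability two disjoint pairs of edge spaces cannot both have meeting
   images.  If three images share a vertex, any further edge space would meet
   some partner disjoint from two of those three, so |I| = 3.  If no vertex lies
   in three images, the set of edge spaces whose image contains a vertex is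
   constant along the edges of V, hence is all of I and has two elements, and
   every tau_i is onto: v would be reducible. *)

Lemma existT_inj2 (I : eqType) (P : I -> Type) (i : I) (x y : P i) :
  existT P i x = existT P i y -> x = y.
Proof. by apply: inj_pair2_eq_dec => a b; exact: (decP eqP). Qed.

Lemma inj_surj_bij (A B : finType) (f : A -> B) :
  injective f -> (forall y, exists x, f x = y) -> bijective f.
Proof.
move=> f_inj f_surj; apply: inj_card_bij => //.
rewrite -(card_codom f_inj); apply/subset_leq_card/subsetP => y _.
by have [x <-] := f_surj y; exact: codom_f.
Qed.

Lemma ltn_cardsD1 (T : finType) (A : {set T}) (k : T) n :
  n.+1 < #|A| -> n < #|A :\ k|.
Proof.
move=> lt; rewrite -ltnS; apply: leq_trans lt _.
by rewrite (cardsD1 k A) -add1n leq_add2r leq_b1.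
Qed.

Lemma gconnected_invariant (G : graph) (T : Type) (f : gV G -> T) :
  gconnected G -> (forall d, f (giota d) = f (gtau d)) -> forall x y, f x = f y.
Proof.
move=> [_ conn] f_edge x y; have /connectP [p xp ->] := conn x y.
elim: p x xp => [|z p IH] x //= /andP [/existsP [d /andP [/eqP <- /eqP <-]] zp].
by rewrite f_edge; exact: IH.
Qed.

Lemma gconnected_edgeless (G : graph) :
  gconnected G -> #|gD G| = 0 -> forall x y : gV G, x = y.
Proof.
move=> [_ conn] noE x y; have /connectP [[|z p] /= xp ->] := conn x y => //.
by case/andP: xp => /existsP [d _]; move/card0_eq: noE => /(_ d).
Qed.

Lemma gconnected_tau_surj (G : graph) :
  gconnected G -> 0 < #|gD G| -> forall u : gV G, exists d : gD G, gtau d = u.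
Proof.
move=> [_ conn] /card_gt0P [d0 _] u.
have /connectP [[|z p] /= up last_p] := conn u (gtau d0); first by exists d0.
by case/andP: up => /existsP [d /andP [/eqP <- _]] _; exists (grev d).
Qed.

Section IncidentImages.
Variables (X : two_covered) (v : gV (Gam X)).

Definition imgs_at (u : gV (VS v)) : {set inc v} :=
  [set i | [exists x, fv (tau_ i) x == u]].

Definition edge_imgs (d : gD (VS v)) : {set inc v} :=
  [set i | [exists x, fd (tau_ i) x == d]].

Lemma imgs_atP u i : reflect (in_img (tau_ i) u) (i \in imgs_at u).
Proof. by rewrite inE; apply: (iffP existsP) => -[x /eqP]; exists x. Qed.

Lemma edge_imgsP d i : reflect (exists x, fd (tau_ i) x = d) (i \in edge_imgs d).
Proof. by rewrite inE; apply: (iffP existsP) => -[x /eqP]; exists x. Qed.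

Lemma edge_imgs_sub_tau d : edge_imgs d \subset imgs_at (gtau d).
Proof.
apply/subsetP => i /edge_imgsP [x <-]; apply/imgs_atP.
by exists (gtau x); rewrite fd_tau.
Qed.

Lemma edge_imgs_sub_iota d : edge_imgs d \subset imgs_at (giota d).
Proof.
apply/subsetP => i /edge_imgsP [x <-]; apply/imgs_atP.
by exists (gtau (grev x)); rewrite /giota -fd_rev fd_tau.
Qed.

Lemma union_iso_embedding (J : {set inc v}) i :
  union_iso J -> i \in J -> embedding (tau_ i).
Proof.
move=> [isoV isoD] iJ; split=> x y Exy.
  exact: existT_inj2 (isoV _ _ _ _ iJ iJ Exy).
exact: existT_inj2 (isoD _ _ _ _ iJ iJ Exy).
Qed.

Lemma union_iso_disjoint (J : {set inc v}) i j u :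
  union_iso J -> i \in J -> j \in J -> i != j ->
  i \in imgs_at u -> j \in imgs_at u -> False.
Proof.
move=> [isoV _] iJ jJ /eqP ij /imgs_atP [x Hx] /imgs_atP [y Hy].
by apply: ij; have /(congr1 (@projT1 _ _)) := isoV _ _ _ _ iJ jJ (etrans Hx (esym Hy)).
Qed.

Lemma unfoldable_degenerate (i0 : inc v) :
  unfoldable v -> ~ embedding (tau_ i0) -> degenerate v.
Proof.
move=> unf not_emb; have [iso0|isoC] := unf [set i0].
  by case: not_emb; apply: union_iso_embedding iso0 _; rewrite inE.
have inC i : i != i0 -> i \in ~: [set i0] by rewrite !inE.
exists i0; split=> //; split=> [i /inC|i j /inC iC /inC jC ij].
  exact: union_iso_embedding isoC.
move=> [u [/imgs_atP iu /imgs_atP ju]].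
exact: union_iso_disjoint isoC iC jC ij iu ju.
Qed.

Lemma unfoldable_disjoint_pairs (a b c d : inc v) u1 u2 :
  unfoldable v -> a != b -> c != d ->
  [/\ a != c, a != d, b != c & b != d] ->
  a \in imgs_at u1 -> b \in imgs_at u1 -> c \in imgs_at u2 -> d \in imgs_at u2 ->
  False.
Proof.
move=> unf ab cd [ac ad bc bd] au bu cu du; have [isoJ|isoC] := unf [set a; b].
  by apply: union_iso_disjoint isoJ _ _ ab au bu; rewrite !inE eqxx ?orbT.
by apply: union_iso_disjoint isoC _ _ cd cu du;
  rewrite !inE negb_or ?(eq_sym c) ?(eq_sym d) ?ac ?bc ?ad ?bd.
Qed.

Lemma imgs_at_some i : exists u, i \in imgs_at u.
Proof.
have [/card_gt0P [x _] _] := @ES_conn X (val i).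
by exists (fv (tau_ i) x); apply/imgs_atP; exists x.
Qed.

Lemma degenerate_not_nondegenerate : degenerate v -> ~ nondegenerate v.
Proof. by move=> [i0 [not_emb _]] [_ [emb _]]; exact: not_emb. Qed.

Lemma card_imgs_at_le3 u : unfoldable v -> #|imgs_at u| <= 3.
Proof.
move=> unf; rewrite leqNgt; apply/negP => S4.
have /card_gt1P [a [b [aS bS ab]]] : 1 < #|imgs_at u| by apply: leq_trans S4.
have /card_gt1P [c [d]] := ltn_cardsD1 b (ltn_cardsD1 a S4).
rewrite !in_setD1 => -[/and3P [cb ca cS] /and3P [db da dS] cd].
apply: (unfoldable_disjoint_pairs unf ab cd _ aS bS cS dS).
by split; rewrite eq_sym.
Qed.

End IncidentImages.

Section Embeddings.
Variables (X : two_covered) (v : gV (Gam X)).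
Hypothesis emb : forall i : inc v, embedding (tau_ i).

(* The two edges of the disjoint union covering d lie in distinct edge spaces,
   since every tau_i is injective on edges. *)
Lemma card_edge_imgs (d : gD (VS v)) : #|edge_imgs d| = 2.
Proof.
set A := [set p : {i : inc v & gD (Ei i)} | fd (tau_ (tag p)) (tagged p) == d].
have <- : #|A| = 2 := @two_cover X v d.
have -> : edge_imgs d = tag @: A.
  apply/setP => i; apply/edge_imgsP/imsetP => [[x Hx]|[[j y] + ->]].
    by exists (Tagged (fun j => gD (Ei j)) x); rewrite // inE Hx.
  by rewrite inE => /eqP Hy; exists y.
apply: card_in_imset => -[i x] [j y]; rewrite !inE /= => /eqP Hx /eqP Hy Eij.
by subst j; congr Tagged; apply: (proj2 (emb i)); rewrite Hx Hy.
Qed.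

Lemma card_imgs_at_gt1 (u : gV (VS v)) : 0 < #|gD (VS v)| -> 1 < #|imgs_at u|.
Proof.
move=> hE; have [d <-] := gconnected_tau_surj (@VS_conn X v) hE u.
by rewrite -(card_edge_imgs d); apply/subset_leq_card/edge_imgs_sub_tau.
Qed.

Lemma exists_meeting_partner (k : inc v) : 1 < #|inc v| ->
  exists e, e != k /\ exists u, k \in imgs_at u /\ e \in imgs_at u.
Proof.
move=> I2; have [u ku] := imgs_at_some k.
have [noE|hE] := posnP #|gD (VS v)|.
  rewrite -cardsT in I2; have /card_gt0P [e] := ltn_cardsD1 k I2.
  rewrite in_setD1 => /andP [ek _]; have [u' eu'] := imgs_at_some e.
  rewrite (gconnected_edgeless (@VS_conn X v) noE u' u) in eu'.
  by exists e; split=> //; exists u.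
have /card_gt0P [e] := ltn_cardsD1 k (card_imgs_at_gt1 u hE).
by rewrite in_setD1 => /andP [ek eu]; exists e; split=> //; exists u.
Qed.

Lemma imgs_at_full (w : gV (VS v)) :
  unfoldable v -> 2 < #|imgs_at w| -> imgs_at w = setT.
Proof.
move=> unf S3; apply/setP => k; rewrite in_setT; apply/contraT => kS.
have I2 : 1 < #|inc v|.
  by rewrite -cardsT; apply: leq_trans (ltnW S3) (subset_leq_card (subsetT _)).
have [e [ek [u [ku eu]]]] := exists_meeting_partner k I2.
have /card_gt1P [c [d]] := ltn_cardsD1 e S3.
rewrite !in_setD1 => -[/andP [ce cS] /andP [de dS] cd].
have kN x : x \in imgs_at w -> k != x by move=> xS; apply: contraNneq kS => ->.
exfalso; apply: (unfoldable_disjoint_pairs unf _ cd _ ku eu cS dS); first by rewrite eq_sym.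
by split; rewrite ?kN // eq_sym.
Qed.

Section SmallImageSets.
Hypothesis small : forall w : gV (VS v), #|imgs_at w| <= 2.

Lemma imgs_at_tau_small (d : gD (VS v)) : imgs_at (gtau d) = edge_imgs d.
Proof. by apply/esym/eqP; rewrite eqEcard edge_imgs_sub_tau card_edge_imgs small. Qed.

Lemma imgs_at_iota_small (d : gD (VS v)) : imgs_at (giota d) = edge_imgs d.
Proof. by apply/esym/eqP; rewrite eqEcard edge_imgs_sub_iota card_edge_imgs small. Qed.

Lemma imgs_at_setT_small (w : gV (VS v)) : imgs_at w = setT.
Proof.
apply/setP => k; rewrite in_setT; have [u ku] := imgs_at_some k.
rewrite (gconnected_invariant (f := @imgs_at X v) (@VS_conn X v) _ w u) // => d.
by rewrite imgs_at_iota_small imgs_at_tau_small.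
Qed.

Lemma reducible_small : 0 < #|inc v| -> (#|inc v| = 1 -> 0 < #|gD (VS v)|) ->
  reducible v.
Proof.
move=> I1 h1; have edge_full (d : gD (VS v)) : edge_imgs d = setT.
  by rewrite -imgs_at_tau_small imgs_at_setT_small.
split=> [|k]; last first.
  have [injV injD] := emb k; split; apply: inj_surj_bij => //.
    by move=> u; apply/imgs_atP; rewrite imgs_at_setT_small in_setT.
  by move=> d; apply/edge_imgsP; rewrite edge_full in_setT.
have [noE|/card_gt0P [d _]] := posnP #|gD (VS v)|; last first.
  by rewrite -cardsT -(edge_full d) card_edge_imgs.
have [/card_gt0P [w _] _] := @VS_conn X v.
move: I1 h1 (small w); rewrite noE imgs_at_setT_small cardsT.
by case: #|inc v| => [|[|[|n]]] // _ /(_ erefl).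
Qed.

End SmallImageSets.

Lemma unfoldable_nondegenerate : unfoldable v -> ~ reducible v -> 0 < #|inc v| ->
  (#|inc v| = 1 -> 0 < #|gD (VS v)|) -> nondegenerate v.
Proof.
move=> unf nred I1 h1.
have [/existsP [w S3]|/existsPn small] :=
  boolP [exists w : gV (VS v), 2 < #|imgs_at w|].
  have full := imgs_at_full unf S3.
  have all_w i : in_img (tau_ i) w by apply/imgs_atP; rewrite full inE.
  split; first by apply/eqP; rewrite -cardsT -full eqn_leq card_imgs_at_le3.
  by split=> //; split=> [i j _|]; exists w.
by case: nred; apply: reducible_small => // w; rewrite leqNgt small.
Qed.

End Embeddings.

Theorem lemma3p1 (X : two_covered) (v : gV (Gam X)) :
  0 < #|inc v| ->
  unfoldable v ->
  ~ reducible v ->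
  (#|inc v| = 1 -> 0 < #|gD (VS v)|) ->
  (degenerate v /\ ~ nondegenerate v) \/ (~ degenerate v /\ nondegenerate v).
Proof.
move=> I1 unf nred h1.
have [[i0 not_emb]|all_emb] := classic (exists i0 : inc v, ~ embedding (tau_ i0)).
  have D := unfoldable_degenerate unf not_emb.
  by left; split=> //; exact: degenerate_not_nondegenerate.
have N := unfoldable_nondegenerate (not_ex_not_all _ _ all_emb) unf nred I1 h1.
by right; split=> // D; exact: degenerate_not_nondegenerate D N.
Qed.
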